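(* For every integer $n\ge 0$, $$\Phi^{(1)}[a; bq^n, b'; c; x, y] = \sum_{k=0}^n \begin{bmatrix} n \\ k \end{bmatrix} q^{2\binom{k}{2}} \frac{(bx)^k (a; q)_k}{(c; q)_k} \Phi^{(1)}[aq^k; bq^k, b'; cq^k; x, y]$$ and $$\Phi^{(1)}[a; bq^{-n}, b'; c; x, y] = \sum_{k=0}^n \begin{bmatrix} n \\ k \end{bmatrix} q^{\binom{k}{2} - nk} \frac{(-bx)^k (a; q)_k}{(c; q)_k} \Phi^{(1)}[aq^k; b, b'; cq^k; x, y].$$
   Context: Let $q$ be a complex number with $0<|q|<1$. For complex $z$ and integer $m\ge 0$, $(z;q)_m=\prod_{j=0}^{m-1}(1-zq^j)$, with $(z;q)_0=1$. For integers $0\le k\le n$, $\begin{bmatrix} n \\ k \end{bmatrix}=\frac{(q;q)_n}{(q;q)_k(q;q)_{n-k}}$ is the $q$-binomial coefficient. The $q$-Appell function $\Phi^{(1)}$ is $$\Phi^{(1)}[a; b, b'; c; x, y] = \sum_{m, n \geq 0} \frac{(a; q)_{m+n} (b; q)_m (b'; q)_n}{(q; q)_m (q; q)_n (c; q)_{m+n}} x^m y^n.$$ Identities are understood as identities of power series in $x,y$ (formal, or convergent for small $|x|,|y|$), with complex parameters chosen so that no denominator occurring vanishes. *)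

From HB Require Import structures.
From mathcomp Require Import all_boot all_order all_algebra.
From mathcomp Require Import reals.
From mathcomp.real_closed Require Import complex.
Set Implicit Arguments. Unset Strict Implicit. Unset Printing Implicit Defensive.
Import Order.TTheory GRing.Theory Num.Theory.
Local Open Scope ring_scope.
Local Open Scope complex_scope.

Definition qpoch (C : ringType) (z q : C) (m : nat) : C :=
  \prod_(j < m) (1 - z * q ^+ j).

Definition qbinom (C : fieldType) (q : C) (n k : nat) : C :=
  qpoch q q n / (qpoch q q k * qpoch q q (n - k)).

(* Bivariate formal power series in x, y, represented by their coefficient
   function: f i j is the coefficient of x^i y^j. *)
Definition fps2 (C : Type) := nat -> nat -> C.

Definition qAppell1 (C : fieldType) (q a b b' c : C) : fps2 C :=
  fun m n => qpoch a q (m + n) * qpoch b q m * qpoch b' q n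
             / (qpoch q q m * qpoch q q n * qpoch c q (m + n)).

Definition fps2_mulXk (C : ringType) (k : nat) (f : fps2 C) : fps2 C :=
  fun m n => if (k <= m)%N then f (m - k)%N n else 0.

(* Writing (z;q)_m/(q;q)_m for the coefficient of x^m in the
   q-binomial series (zx;q)_oo/(x;q)_oo, the coefficient of x^i y^j in
   Phi^(1)[a; z, b'; c; x, y] is a factor independent of z times
   (z;q)_i/(q;q)_i, and multiplying by (a;q)_k/(c;q)_k x^k while shifting
   a, c to aq^k, cq^k preserves that factor.  Both identities thus reduce to
   one-variable expansions of (bq^n x;q)_oo/(x;q)_oo and (bq^-n x;q)_oo/(x;q)_oo,
   proved by induction on n from the contiguous relation
   (zq;q)_(m+1)/(q;q)_(m+1) = (z;q)_(m+1)/(q;q)_(m+1) + z (zq;q)_m/(q;q)_m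
   and the two q-Pascal rules. *)
From HB Require Import structures.
From mathcomp Require Import all_boot all_order all_algebra.
From mathcomp Require Import reals.
From mathcomp.real_closed Require Import complex.
From mathcomp Require Import ring.
Set Implicit Arguments. Unset Strict Implicit. Unset Printing Implicit Defensive.
Import Order.TTheory GRing.Theory Num.Theory.
Local Open Scope ring_scope.

Lemma qpoch0 (R : nzRingType) (z q : R) : qpoch z q 0 = 1.
Proof. by rewrite /qpoch big_ord0. Qed.

Lemma qpochS (R : nzRingType) (z q : R) m :
  qpoch z q m.+1 = qpoch z q m * (1 - z * q ^+ m).
Proof. by rewrite /qpoch big_ord_recr. Qed.

Lemma qpochSl (R : comNzRingType) (z q : R) m :
  qpoch z q m.+1 = (1 - z) * qpoch (z * q) q m.
Proof.
rewrite /qpoch big_ord_recl /= expr0 mulr1; congr (_ * _).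
by apply: eq_bigr => i _; rewrite /bump /= add1n exprS mulrA.
Qed.

Lemma qpochD (R : comNzRingType) (z q : R) k l :
  qpoch z q (k + l) = qpoch z q k * qpoch (z * q ^+ k) q l.
Proof.
rewrite /qpoch big_split_ord /=; congr (_ * _).
by apply: eq_bigr => i _; rewrite exprD mulrA.
Qed.

Lemma expr_neq1_norm_lt1 (R : numDomainType) (q : R) k :
  `|q| < 1 -> q ^+ k.+1 != 1.
Proof.
move=> q_lt1; apply/eqP => qk1.
by move: (exprn_ilt1 k.+1 (normr_ge0 q) q_lt1); rewrite -normrX qk1 normr1 ltxx.
Qed.

Lemma big_ord_shift_split (V : nmodType) n (X Y : nat -> V) : X n.+1 = 0 ->
  \sum_(k < n.+1) (X k + Y k) = X 0%N + \sum_(k < n.+1) (X k.+1 + Y k).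
Proof.
move=> Xn1; rewrite !big_split /= addrA; congr (_ + _).
by rewrite big_ord_recl [X in _ = _ + X]big_ord_recr /= Xn1 addr0.
Qed.

Definition series_mulXk (R : nzRingType) k (f : nat -> R) : nat -> R :=
  fun m => if (k <= m)%N then f (m - k)%N else 0.

Lemma series_mulX0k (R : nzRingType) (f : nat -> R) m : series_mulXk 0 f m = f m.
Proof. by rewrite /series_mulXk subn0. Qed.

Definition qbinom_series (F : fieldType) (q z : F) : nat -> F :=
  fun m => qpoch z q m / qpoch q q m.

(* [qbinom] extended by 0 for k > n, so that the q-Pascal rules hold for all k. *)
Definition qchoose (F : fieldType) (q : F) n k :=
  if (k <= n)%N then qbinom q n k else 0.

Section NotRootOfUnity.

Variables (F : fieldType) (q : F).
Hypothesis qNroot : forall k, q ^+ k.+1 != 1.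

Lemma one_subr_expS_neq0 k : 1 - q ^+ k.+1 != 0.
Proof. by rewrite subr_eq0 eq_sym qNroot. Qed.

Lemma qpoch_qq_neq0 m : qpoch q q m != 0.
Proof. by apply/prodf_neq0 => j _; rewrite -exprS one_subr_expS_neq0. Qed.

Lemma qbinom_series0 z : qbinom_series q z 0 = 1.
Proof. by rewrite /qbinom_series !qpoch0 divr1. Qed.

Lemma qbinom_series_contiguous z m :
  qbinom_series q (z * q) m.+1 = qbinom_series q z m.+1 + z * qbinom_series q (z * q) m.
Proof.
rewrite /qbinom_series [qpoch (z * q) q m.+1]qpochS [qpoch z q m.+1]qpochSl [qpoch q q m.+1]qpochS.
by field; rewrite -exprS one_subr_expS_neq0 qpoch_qq_neq0.
Qed.

Lemma qbinom_series_mulXk_contiguous z k m :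
  series_mulXk k (qbinom_series q (z * q)) m =
  series_mulXk k (qbinom_series q z) m + z * series_mulXk k.+1 (qbinom_series q (z * q)) m.
Proof.
rewrite /series_mulXk; case: ltngtP => [lt_km|lt_mk|->].
- by rewrite -(subnSK lt_km) qbinom_series_contiguous.
- by rewrite mulr0 addr0.
- by rewrite subnn !qbinom_series0 mulr0 addr0.
Qed.

Lemma qchoose0 n : qchoose q n 0 = 1.
Proof.
by rewrite /qchoose /qbinom subn0 qpoch0 mul1r divff // qpoch_qq_neq0.
Qed.

Lemma qchoose_small n k : (n < k)%N -> qchoose q n k = 0.
Proof. by rewrite /qchoose ltnNge => /negPf ->. Qed.

Lemma qchoose_absorb n k :
  (1 - q ^+ k.+1) * qchoose q n.+1 k.+1 = (1 - q ^+ n.+1) * qchoose q n k.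
Proof.
rewrite /qchoose ltnS; case: leqP => kn; last by rewrite !mulr0.
rewrite /qbinom subSS [qpoch q q n.+1]qpochS [qpoch q q k.+1]qpochS -!exprS.
by field; rewrite one_subr_expS_neq0 !qpoch_qq_neq0.
Qed.

Lemma qchoose_succ_ratio n k :
  (1 - q ^+ k.+1) * qchoose q n k.+1 = (1 - q ^+ (n - k)) * qchoose q n k.
Proof.
rewrite /qchoose; case: ltngtP => [kn|_|->]; last 2 first.
- by rewrite !mulr0.
- by rewrite subnn expr0 subrr mulr0 mul0r.
rewrite /qbinom -(subnSK kn) [qpoch q q (n - k.+1).+1]qpochS [qpoch q q k.+1]qpochS -!exprS.
by field; rewrite !one_subr_expS_neq0 !qpoch_qq_neq0.
Qed.

Lemma qchooseS n k :
  qchoose q n.+1 k.+1 = qchoose q n k + q ^+ k.+1 * qchoose q n k.+1.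
Proof.
apply: (mulfI (one_subr_expS_neq0 k)).
rewrite qchoose_absorb mulrDr mulrCA qchoose_succ_ratio.
case: (leqP k n) => [kn|nk]; last by rewrite qchoose_small // !mulr0 addr0.
have -> : q ^+ n.+1 = q ^+ k.+1 * q ^+ (n - k) by rewrite -exprD addSn subnKC.
by ring.
Qed.

Lemma qchooseS_dual n k :
  qchoose q n.+1 k.+1 = qchoose q n k.+1 + q ^+ (n - k) * qchoose q n k.
Proof.
apply/eqP; rewrite qchooseS -subr_eq0.
have -> : qchoose q n k + q ^+ k.+1 * qchoose q n k.+1
          - (qchoose q n k.+1 + q ^+ (n - k) * qchoose q n k)
        = (1 - q ^+ (n - k)) * qchoose q n k - (1 - q ^+ k.+1) * qchoose q n k.+1.
  by ring.
by rewrite qchoose_succ_ratio subrr.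
Qed.

Lemma qbinom_series_mul_expq b n m :
  qbinom_series q (b * q ^+ n) m =
  \sum_(k < n.+1) qchoose q n k * q ^+ (2 * 'C(k, 2)) * b ^+ k
                   * series_mulXk k (qbinom_series q (b * q ^+ k)) m.
Proof.
elim: n b => [|n IHn] b.
  by rewrite big_ord1 qchoose0 bin0n muln0 !expr0 !mulr1 mul1r series_mulX0k.
rewrite exprS mulrA IHn.
pose T k := series_mulXk k (qbinom_series q (b * q ^+ k)) m.
pose c k := qchoose q n k * q ^+ (2 * 'C(k, 2)) * (b * q) ^+ k.
pose X k := c k * T k; pose Y k := c k * (b * q ^+ k) * T k.+1.
transitivity (\sum_(k < n.+1) (X k + Y k)).
  apply: eq_bigr => k _; rewrite [b * q * _]mulrAC qbinom_series_mulXk_contiguous.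
  by rewrite -[b * _ * q]mulrA -exprSr mulrDr mulrA.
rewrite big_ord_shift_split; last by rewrite /X /c qchoose_small // !mul0r.
rewrite [RHS]big_ord_recl; congr (_ + _).
  by rewrite /X /c /T !qchoose0 !expr0 !mulr1.
apply: eq_bigr => k _; rewrite lift0 /X /Y /c /T qchooseS binS bin1 mulnDr exprD mul2n -addnn.
by rewrite !exprD !exprS exprMn; ring.
Qed.

Lemma qbinom_series_div_expq b n m : q != 0 ->
  qbinom_series q (b / q ^+ n) m =
  \sum_(k < n.+1) qchoose q n k * (q ^+ 'C(k, 2) / q ^+ (n * k)) * (- b) ^+ k
                   * series_mulXk k (qbinom_series q b) m.
Proof.
move=> q_neq0; elim: n b => [|n IHn] b.
  by rewrite big_ord1 qchoose0 bin0n muln0 !expr0 !divr1 !mulr1 mul1r series_mulX0k.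
rewrite exprS invfM mulrA IHn.
pose T k := series_mulXk k (qbinom_series q b) m.
pose c k := qchoose q n k * (q ^+ 'C(k, 2) / q ^+ (n * k)) * (- (b / q)) ^+ k.
have T_div k : series_mulXk k (qbinom_series q (b / q)) m = T k - b / q * T k.+1.
  by rewrite /T -{2 4}(divfK q_neq0 b) qbinom_series_mulXk_contiguous addrK.
pose X k := c k * T k; pose Y k := - (c k * (b / q)) * T k.+1.
transitivity (\sum_(k < n.+1) (X k + Y k)).
  by apply: eq_bigr => k _; rewrite T_div /X /Y /c; ring.
rewrite big_ord_shift_split; last by rewrite /X /c qchoose_small // !mul0r.
rewrite [RHS]big_ord_recl; congr (_ + _).
  by rewrite /X /c !qchoose0 !muln0 !expr0 !divr1 !mulr1.
apply: eq_bigr => -[k lt_kn] _; rewrite lift0 /= {lt_kn} /X /Y /c /T qchooseS_dual.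
case: (leqP k n) => [kn|nk]; last first.
  have nk1 : (n < k.+1)%N by apply: ltnW.
  by rewrite (qchoose_small nk) (qchoose_small nk1); ring.
have [d ->] : exists d, n = (k + d)%N by exists (n - k)%N; rewrite subnKC.
rewrite addKn binS bin1 mulSn !mulnS !exprD -mulNr !exprMn !exprVn !exprS.
by field; rewrite q_neq0 !expf_neq0.
Qed.

End NotRootOfUnity.

Lemma qAppell1_qbinom_series (F : fieldType) (q a z b' c : F) i j :
  qAppell1 q a z b' c i j =
  qpoch a q (i + j) * qpoch b' q j / (qpoch q q j * qpoch c q (i + j))
  * qbinom_series q z i.
Proof. by rewrite /qAppell1 /qbinom_series !invfM; ring. Qed.

Lemma qAppell1_mulXk (F : fieldType) (q a z b' c w : F) k i j :
  w * qpoch a q k / qpoch c q k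
  * fps2_mulXk k (qAppell1 q (a * q ^+ k) z b' (c * q ^+ k)) i j =
  qpoch a q (i + j) * qpoch b' q j / (qpoch q q j * qpoch c q (i + j))
  * (w * series_mulXk k (qbinom_series q z) i).
Proof.
rewrite /fps2_mulXk /series_mulXk; case: leqP => [ki|_]; last by rewrite !mulr0.
rewrite qAppell1_qbinom_series -(subnKC ki) addKn -addnA (qpochD a q k) (qpochD c q k).
move: (qpoch (a * q ^+ k) q _) (qpoch (c * q ^+ k) q _) (qbinom_series q z _) => A C S.
by rewrite !invfM; ring.
Qed.

Local Open Scope complex_scope.

Theorem theorem4 (R : realType) (q a b b' c : R[i])
  (hq0 : 0 < `|q|) (hq1 : `|q| < 1)
  (hc : forall j : nat, c * q ^+ j != 1) (n : nat) :
  (forall i j : nat,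
     qAppell1 q a (b * q ^+ n) b' c i j =
     \sum_(k < n.+1)
        qbinom q n k * q ^+ (2 * 'C(k, 2)) * b ^+ k * qpoch a q k / qpoch c q k
        * fps2_mulXk k (qAppell1 q (a * q ^+ k) (b * q ^+ k) b' (c * q ^+ k)) i j)
  /\
  (forall i j : nat,
     qAppell1 q a (b * q ^- n) b' c i j =
     \sum_(k < n.+1)
        qbinom q n k * q ^ ('C(k, 2)%:Z - (n * k)%:Z) * (- b) ^+ k * qpoch a q k
        / qpoch c q k
        * fps2_mulXk k (qAppell1 q (a * q ^+ k) b b' (c * q ^+ k)) i j).
Proof.
have q_neq0 : q != 0 by rewrite -normr_gt0.
have qNroot k : q ^+ k.+1 != 1 := expr_neq1_norm_lt1 k hq1.
have qchoose_ord k : (k < n.+1)%N -> qchoose q n k = qbinom q n k.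
  by rewrite /qchoose ltnS => ->.
split=> i j; rewrite qAppell1_qbinom_series.
  rewrite qbinom_series_mul_expq // mulr_sumr; apply: eq_bigr => k _.
  by rewrite qAppell1_mulXk qchoose_ord.
rewrite qbinom_series_div_expq // mulr_sumr; apply: eq_bigr => k _.
by rewrite qAppell1_mulXk qchoose_ord // expfzDr // -exprnN.
Qed.
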